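(* Let $\pi\in\mathcal{S}_n$ be a Schröder permutation. Then for every $k\ge1$, $\pi$ avoids the pattern $12\cdots k$ if and only if $\phi(\pi)$ avoids $12\cdots k$.
   Context: A permutation avoids $\tau\in\mathcal{S}_k$ if no subsequence of length $k$ is in the same relative order as $\tau$; $12\cdots k$ is the increasing pattern of length $k$. A Schröder permutation is one avoiding both $1243$ and $2143$. Represent $\pi\in\mathcal{S}_n$ by an $n\times n$ array, rows $i$ numbered top to bottom, columns $j$ left to right, with a dot in square $(i,\pi_i)$. The diagram $D(\pi)$ is the set of squares $(i,j)$ with $\pi_i>j$ and $\pi^{-1}(j)>i$. The essential set $\mathcal{E}(\pi)$ is the set of $(i,j)\in D(\pi)$ with $(i+1,j)\notin D(\pi)$ and $(i,j+1)\notin D(\pi)$ (squares outside the array count as not in $D(\pi)$). The rank of $(i,j)$ with respect to $\pi$ is $\rho_\pi(i,j)=\#\{k<i:\pi_k<j\}$; $\mathcal{E}_r(\pi)$ is the set of elements of $\mathcal{E}(\pi)$ of rank $r$. A permutation is uniquely determined by its essential set together with the ranks of its elements (Fulton). For a Schröder permutation $\pi\in\mathcal{S}_n$, let $\mathcal{E}^*(\pi)$ be obtained from $\mathcal{E}(\pi)$ by replacing each $(i,j)\in\mathcal{E}_1(\pi)$ by $(i-1,j-1)$; there is a unique $\sigma\in\mathcal{S}_n$ with $\mathcal{E}(\sigma)=\mathcal{E}^*(\pi)$ and all elements of $\mathcal{E}(\sigma)$ of rank $0$ (with respect to $\sigma$), and $\phi(\pi):=\sigma$ (a $132$-avoiding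 permutation). *)

From mathcomp Require Import all_boot all_fingroup.
Set Implicit Arguments. Unset Strict Implicit. Unset Printing Implicit Defensive.

(* Conventions: rows and columns are 0-based ('I_n); row i holds a dot in
   column s i.  All comparisons are on the underlying nat values. *)

Definition contains (n : nat) (s : 'S_n) (p : seq nat) : Prop :=
  exists f : 'I_(size p) -> 'I_n,
    (forall a b : 'I_(size p), a < b -> f a < f b) /\
    (forall a b : 'I_(size p), (s (f a) < s (f b)) = (nth 0 p a < nth 0 p b)).

Definition avoids (n : nat) (s : 'S_n) (p : seq nat) : Prop := ~ contains s p.

Definition incr_pat (k : nat) : seq nat := iota 1 k.

Definition schroder (n : nat) (s : 'S_n) : Prop :=
  avoids s [:: 1; 2; 4; 3] /\ avoids s [:: 2; 1; 4; 3].

Definition diagram (n : nat) (s : 'S_n) : {set 'I_n * 'I_n} :=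
  [set x : 'I_n * 'I_n | (x.2 < s x.1) && (x.1 < (s^-1)%g x.2)].

(* membership of a nat pair in the diagram (false outside the array) *)
Definition inD (n : nat) (s : 'S_n) (i j : nat) : bool :=
  [exists x in diagram s, (x.1 == i :> nat) && (x.2 == j :> nat)].

Definition ess (n : nat) (s : 'S_n) : {set 'I_n * 'I_n} :=
  [set x in diagram s | ~~ inD s x.1.+1 x.2 && ~~ inD s x.1 x.2.+1].

Definition rank (n : nat) (s : 'S_n) (x : 'I_n * 'I_n) : nat :=
  #|[set k : 'I_n | (k < x.1) && (s k < x.2)]|.

Definition shift_ess (n : nat) (s : 'S_n) (x : 'I_n * 'I_n) : nat * nat :=
  if rank s x == 1 then ((x.1 : nat).-1, (x.2 : nat).-1) else ((x.1 : nat), (x.2 : nat)).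

Definition ess_star (n : nat) (s : 'S_n) : {set 'I_n * 'I_n} :=
  [set y : 'I_n * 'I_n | [exists x in ess s, shift_ess s x == ((y.1 : nat), (y.2 : nat))]].

Definition phi_spec (n : nat) (p sg : 'S_n) : bool :=
  (ess sg == ess_star p) && [forall x in ess sg, rank sg x == 0].

Definition phi (n : nat) (p : 'S_n) : 'S_n :=
  odflt 1%g [pick sg | phi_spec p sg].

(* Every cell of the diagram of a Schroder permutation p has rank at most 1: two dots
   north-west of a cell (i, j), followed by the dot of row i and the dot of column j, would
   form a 1243 or a 2143.  Hence the down-set generated by E*(p) consists of the rank-0 cells
   of D(p) and of the rank-1 cells shifted by (-1, -1), and E*(p) is exactly its set of
   corners; this down-set is therefore the diagram of the dominant permutation phi(p).
   In a dominant permutation the longest increasing subsequence starting at x is x followed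
   by all later larger entries, so phi(p) contains 12...k iff k <= n - x - r_x for some x,
   where r_x is the length of row x of the shape.  The same criterion holds for p.  Let m
   minimise p on the rows up to x.  If p m < p (x+1), then r_x is the length of row x+1 of
   D(p), and m, x+1 and the later entries larger than p (x+1) form an increasing sequence of
   length n - x - r_x; otherwise r_x = p m, and m followed by the later entries larger than
   p m is such a sequence.  These sequences increase because 1243 and 2143 are avoided; and
   the two first terms a < c of an increasing sequence of p fall in the first case at
   x = c - 1. *)

From mathcomp Require Import all_boot all_fingroup zify.
Set Implicit Arguments. Unset Strict Implicit. Unset Printing Implicit Defensive.

Section Counting.
Variable n : nat.

Lemma card_ordE (P : pred nat) : #|[set y : 'I_n | P y]| = count P (iota 0 n).
Proof. by rewrite cardsE cardE /enum_mem size_filter -enumT -val_enum_ord count_map. Qed.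

Lemma card_ltn m : m <= n -> #|[set y : 'I_n | y < m]| = m.
Proof.
move=> le_mn; rewrite (card_ordE (fun y => y < m)) -size_filter.
by rewrite (filter_iota_ltn 0 le_mn) size_iota.
Qed.

Lemma card_geq m : m <= n -> #|[set y : 'I_n | m <= y]| = n - m.
Proof.
move=> le_mn; rewrite (card_ordE (fun y => m <= y)).
rewrite (@eq_count _ _ (predC (fun y => y < m))) => [|y]; last by rewrite /= leqNgt.
rewrite -[n in RHS](size_iota 0) -(count_predC (fun y => y < m)).
by rewrite -(card_ordE (fun y => y < m)) card_ltn // addKn.
Qed.

Lemma card_shift (P : pred nat) : ~~ P 0 -> ~~ P n ->
  #|[set y : 'I_n | P y.+1]| = #|[set y : 'I_n | P y]|.
Proof.
move=> P0 Pn; rewrite (card_ordE (fun y => P y.+1)) card_ordE.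
have : count P (iota 0 n.+1) = count P (iota 1 n) by rewrite /= (negbTE P0).
rewrite -[n.+1]addn1 iotaD count_cat /= (negbTE Pn) !addn0 => ->.
by rewrite (iotaDl 1 0 n) count_map.
Qed.

Lemma card_or (A B : pred 'I_n) : (forall y, A y -> ~~ B y) ->
  #|[set y | A y || B y]| = #|[set y | A y]| + #|[set y | B y]|.
Proof.
move=> AB; rewrite -cardsUI (_ : _ :&: _ = set0) ?cards0 ?addn0; last first.
  by apply/setP => y; rewrite !inE; case Ay: (A y); rewrite //= (negbTE (AB y Ay)).
by apply: eq_card => y; rewrite !inE.
Qed.

Lemma downset_mem (A : {set 'I_n}) :
  (forall y z : 'I_n, z <= y -> y \in A -> z \in A) -> forall y : 'I_n, (y \in A) = (y < #|A|).
Proof.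
move=> A_down y; apply/idP/idP => [yA | lt_y].
  rewrite -[y.+1](@card_ltn y.+1) ?ltn_ord //; apply/subset_leq_card/subsetP => z.
  by rewrite inE => le_zy; apply: A_down yA.
apply: contraLR lt_y => yA; rewrite -leqNgt -[X in _ <= X](@card_ltn y (ltnW (ltn_ord y))).
apply/subset_leq_card/subsetP => z zA; rewrite inE ltnNge.
by apply: contra yA => le_yz; apply: A_down zA.
Qed.

End Counting.

Section Diagram.
Variable n : nat.
Implicit Types (s : 'S_n) (a x y : 'I_n) (i j : nat).

Lemma inDE s x y : inD s x y = (y < s x) && (x < (s^-1)%g y).
Proof.
apply/existsP/idP => [[[x' y']] | xy_in]; last by exists (x, y); rewrite inE xy_in !eqxx.
by rewrite inE => /andP[xy_in /andP[/eqP/val_inj <- /eqP/val_inj <-]].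
Qed.

Lemma inD_ltn s i j : inD s i j -> (i < n) && (j < n).
Proof. by case/existsP => -[x y] /andP[_ /andP[/eqP <- /eqP <-]]; rewrite !ltn_ord. Qed.

Lemma essE s e :
  (e \in ess s) = [&& inD s e.1 e.2, ~~ inD s e.1.+1 e.2 & ~~ inD s e.1 e.2.+1].
Proof. by rewrite !inE inDE. Qed.

Definition rk s i j := #|[set a : 'I_n | (a < i) && (s a < j)]|.

Lemma rankE s e : rank s e = rk s e.1 e.2.
Proof. by []. Qed.

Lemma rk_mono s i j i' j' : i <= i' -> j <= j' -> rk s i j <= rk s i' j'.
Proof.
move=> le_ii' le_jj'; apply/subset_leq_card/subsetP => a; rewrite !inE.
by case/andP=> ? ?; apply/andP; split; lia.
Qed.

Lemma rk_gt0P s i j : reflect (exists a, a < i /\ s a < j) (0 < rk s i j).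
Proof.
rewrite card_gt0; apply: (iffP (set0Pn _)) => -[a].
  by rewrite inE => /andP[]; exists a.
by case=> ? ?; exists a; rewrite inE; apply/andP.
Qed.

Lemma rkSl s x j : rk s x.+1 j = (s x < j) + rk s x j.
Proof.
rewrite /rk (cardsD1 x) inE ltnSn /=; congr (_ + _); apply: eq_card => a.
rewrite !inE [a < x.+1]ltnS [a <= x]leq_eqVlt val_eqE.
by case: eqVneq => [->|] //=; rewrite ltnn.
Qed.

Lemma rkSr s i y : rk s i y.+1 = ((s^-1)%g y < i) + rk s i y.
Proof.
rewrite /rk (cardsD1 ((s^-1)%g y)) inE permKV ltnSn andbT; congr (_ + _).
apply: eq_card => a; rewrite !inE [s a < y.+1]ltnS [s a <= y]leq_eqVlt val_eqE.
by rewrite -(inj_eq (@perm_inj _ s)) permKV; case: eqVneq => [->|] //=; rewrite ltnn andbF.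
Qed.

Lemma inD_rk0E s i j : i < n -> j < n -> (inD s i j && (rk s i j == 0)) = (rk s i.+1 j.+1 == 0).
Proof.
move=> lt_in lt_jn; pose x := Ordinal lt_in; pose y := Ordinal lt_jn.
rewrite -[inD s i j]/(inD s x y) -[i]/(x : nat) -[j]/(y : nat) rkSr rkSl inDE.
rewrite !addn_eq0 !eqb0 ltnS -!ltnNge; case: (ltnP x ((s^-1)%g y)) => [lt_x | _]; last first.
  by rewrite andbF.
rewrite andbT /=; congr (_ && _); rewrite ltnS ltn_neqAle; case: eqVneq => [eq_y | //=].
by move: lt_x; rewrite (_ : y = s x) ?permK ?ltnn //; apply: val_inj.
Qed.

(* Walk down, or else right, inside the diagram: neither step changes the rank. *)
Lemma ess_above s x y : inD s x y ->
  exists2 e, e \in ess s & [/\ x <= e.1, y <= e.2 & rk s e.1 e.2 = rk s x y].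
Proof.
move: {2}(n - x + (n - y)) (leqnn (n - x + (n - y))) => m.
elim: m x y => [|m IH] x y le_m xy_in; first by move: (ltn_ord x) (ltn_ord y); lia.
have /andP[lt_y lt_x] : (y < s x) && (x < (s^-1)%g y) by rewrite -inDE.
case down: (inD s x.+1 y).
  have /andP[x1_lt _] := inD_ltn down.
  have [e e_ess [le_x le_y rk_e]] := IH (Ordinal x1_lt) y ltac:(rewrite /=; lia) down.
  rewrite /= in le_x; rewrite /= rkSl ltnNge (ltnW lt_y) in rk_e.
  by exists e => //; split => //; apply: ltnW.
case right: (inD s x y.+1).
  have /andP[_ y1_lt] := inD_ltn right.
  have [e e_ess [le_x le_y rk_e]] := IH x (Ordinal y1_lt) ltac:(rewrite /=; lia) right.
  rewrite /= in le_y; rewrite /= rkSr ltnNge (ltnW lt_x) in rk_e.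
  by exists e => //; split => //; apply: ltnW.
by exists (x, y); rewrite ?essE /= ?xy_in ?down ?right.
Qed.

Lemma inD_of_same_rk s (c d : 'I_n) i j :
  inD s c d -> i <= c -> j <= d -> rk s i j = rk s c d -> inD s i j.
Proof.
rewrite inDE => /andP[lt_d_sc lt_c_sd] le_ic le_jd eq_rk.
have /(subset_cardP eq_rk) same_dots :
    [set a : 'I_n | (a < i) && (s a < j)] \subset [set a : 'I_n | (a < c) && (s a < d)].
  by apply/subsetP => a; rewrite !inE => /andP[? ?]; apply/andP; split; lia.
have dot_in a : a < c -> s a < d -> a < i /\ s a < j.
  by move=> lt_ac lt_sad; have := same_dots a; rewrite !inE lt_ac lt_sad => /andP.
pose x := Ordinal (leq_ltn_trans le_ic (ltn_ord c)).
pose y := Ordinal (leq_ltn_trans le_jd (ltn_ord d)).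
rewrite -[inD s i j]/(inD s x y) inDE; apply/andP; split; rewrite ltnNge; apply/negP => le.
- have ne_xc : x != c by apply: contraTneq le => ->; rewrite -ltnNge (leq_ltn_trans le_jd lt_d_sc).
  have ne_sxd : s x != d by apply: contraTneq lt_c_sd => <-; rewrite permK -leqNgt.
  have lt_xc : x < c by rewrite ltn_neqAle; apply/andP.
  have lt_sxd : s x < d by rewrite ltn_neqAle; apply/andP; split; last exact: leq_trans le le_jd.
  by have [] := dot_in x lt_xc lt_sxd; rewrite ltnn.
- set a := (s^-1)%g y in le; have s_a : s a = y by rewrite permKV.
  have ne_ac : a != c by apply: contraTneq lt_d_sc => <-; rewrite s_a -leqNgt.
  have ne_yd : y != d by apply: contraTneq lt_c_sd => <-; rewrite -leqNgt (leq_trans le le_ic).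
  have lt_ac : a < c by rewrite ltn_neqAle; apply/andP; split; last exact: leq_trans le le_ic.
  have lt_sad : s a < d by rewrite s_a ltn_neqAle; apply/andP.
  by have [_] := dot_in a lt_ac lt_sad; rewrite s_a ltnn.
Qed.

Lemma inD_right_stop s (c d : 'I_n) i :
  inD s c d -> ~~ inD s c d.+1 -> c <= i -> ~~ inD s i d.+1.
Proof.
move=> cd_in not_right le_ci; apply/negP => id_in.
have /andP[lt_in lt_dn] := inD_ltn id_in; pose d' := Ordinal lt_dn.
move: cd_in not_right id_in.
rewrite -[inD s c d.+1]/(inD s c d') -[inD s i d.+1]/(inD s (Ordinal lt_in) d') !inDE /=.
move=> /andP[lt_d_sc _] /nandP[le | le] /andP[_ lt_i].
  have eq_sc : s c = d' by apply: val_inj; apply/eqP; rewrite eqn_leq [s c <= _]leqNgt le lt_d_sc.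
  by move: lt_i; rewrite -eq_sc permK ltnNge le_ci.
by move: lt_i; rewrite ltnNge (@leq_trans c) // leqNgt.
Qed.

Lemma inD_down_stop s (c d : 'I_n) j :
  inD s c d -> ~~ inD s c.+1 d -> d <= j -> ~~ inD s c.+1 j.
Proof.
move=> cd_in not_down le_dj; apply/negP => cj_in.
have /andP[lt_cn lt_jn] := inD_ltn cj_in; pose c' := Ordinal lt_cn.
move: cd_in not_down cj_in.
rewrite -[inD s c.+1 d]/(inD s c' d) -[inD s c.+1 j]/(inD s c' (Ordinal lt_jn)) !inDE /=.
move=> /andP[_ lt_c_d] /nandP[le | le] /andP[lt_j _].
  by move: lt_j; rewrite ltnNge (@leq_trans d) // leqNgt.
have eq_c : (s^-1)%g d = c'.
  by apply: val_inj; apply/eqP; rewrite eqn_leq [_ <= c.+1]leqNgt le lt_c_d.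
by move: lt_j; rewrite -eq_c permKV ltnNge le_dj.
Qed.

Definition below (E : {set 'I_n * 'I_n}) i j := [exists e in E, (i <= e.1) && (j <= e.2)].

Lemma below_mono E i j i' j' : below E i j -> i' <= i -> j' <= j -> below E i' j'.
Proof.
case/existsP => e /andP[eE /andP[le_i le_j]] le_i' le_j'.
by apply/existsP; exists e; rewrite eE; apply/andP; split; lia.
Qed.

Lemma below_ltn E i j : below E i j -> (i < n) && (j < n).
Proof.
case/existsP => -[a b] /andP[_ /andP[le_i le_j]].
by apply/andP; split; [apply: leq_ltn_trans le_i _ | apply: leq_ltn_trans le_j _].
Qed.

Lemma rank0_diagram s : {in ess s, forall e, rank s e = 0} ->
  forall i j, inD s i j = below (ess s) i j.
Proof.
move=> ess_rk0 i j; apply/idP/existsP => [ij_in | [e /andP[e_ess /andP[le_i le_j]]]].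
  have /andP[lt_i lt_j] := inD_ltn ij_in.
  have [e e_ess [le_i le_j _]] := ess_above (x := Ordinal lt_i) (y := Ordinal lt_j) ij_in.
  by exists e; apply/and3P; split.
have e_in : inD s e.1 e.2 by move: e_ess; rewrite essE => /and3P[].
apply: (inD_of_same_rk e_in le_i le_j).
by have := rk_mono s le_i le_j; rewrite -rankE ess_rk0 //; lia.
Qed.

Definition dominant s := forall i j i' j', inD s i j -> i' <= i -> j' <= j -> inD s i' j'.

Lemma dominant_rk0 s i j : dominant s -> inD s i j -> rk s i j = 0.
Proof.
move=> dom ij_in; apply/eqP; rewrite eqn0Ngt; apply/negP => /rk_gt0P[a [lt_ai lt_saj]].
have /andP[_ lt_j] := inD_ltn ij_in.
have := dom _ _ a j ij_in (ltnW lt_ai) (leqnn j).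
by rewrite -[inD s a j]/(inD s a (Ordinal lt_j)) inDE => /andP[/= lt_j_sa _]; lia.
Qed.

Lemma ess_below s E : (forall i j, inD s i j = below E i j) ->
  {in E, forall e : 'I_n * 'I_n, ~~ below E e.1.+1 e.2 && ~~ below E e.1 e.2.+1} -> ess s = E.
Proof.
move=> sE corner; apply/setP => e; rewrite essE !sE; apply/idP/idP => [|eE]; last first.
  have /andP[-> ->] := corner e eE; rewrite !andbT.
  by apply/existsP; exists e; rewrite eE !leqnn.
case/and3P => /existsP[e' /andP[e'E /andP[le1 le2]]] not_down not_right.
have eq1 : e.1 = e'.1.
  apply: val_inj; apply/eqP; rewrite eqn_leq le1 leqNgt; apply: contra not_down => lt.
  by apply/existsP; exists e'; rewrite e'E lt le2.
have eq2 : e.2 = e'.2.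
  apply: val_inj; apply/eqP; rewrite eqn_leq le2 leqNgt; apply: contra not_right => lt.
  by apply/existsP; exists e'; rewrite e'E lt le1.
by rewrite (surjective_pairing e) eq1 eq2 -surjective_pairing.
Qed.

End Diagram.

Section Increasing.
Variable n : nat.
Implicit Types (s : 'S_n) (x y : 'I_n) (S : {set 'I_n}).

Definition incr_on s S := {in S &, forall x y, x < y -> s x < s y}.

Lemma contains_incrP s k :
  contains s (incr_pat k) <-> exists2 S, incr_on s S & k <= #|S|.
Proof.
rewrite /contains /incr_pat; set m := size (iota 1 k); have m_k : m = k by rewrite /m size_iota.
have val_pat (a b : 'I_m) : (nth 0 (iota 1 k) a < nth 0 (iota 1 k) b) = (a < b).
  by rewrite !nth_iota -?m_k.
split => [[f [f_mono f_val]] | [S S_incr le_kS]].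
  have f_inj : injective f.
    move=> a b eq_f; apply: val_inj; case: (ltngtP a b) => // lt.
      by have := f_mono _ _ lt; rewrite eq_f ltnn.
    by have := f_mono _ _ lt; rewrite eq_f ltnn.
  exists (f @: setT); last by rewrite card_imset // cardsT card_ord m_k.
  move=> _ _ /imsetP[a _ ->] /imsetP[b _ ->] lt_f; rewrite f_val val_pat.
  case: (ltngtP a b) => // [lt_ba | /val_inj eq_ab]; last by rewrite eq_ab ltnn in lt_f.
  by have := f_mono _ _ lt_ba; rewrite ltnNge (ltnW lt_f).
have lt_S (a : 'I_m) : a < #|S| by rewrite (leq_trans (ltn_ord a)) // m_k.
pose f a := enum_val (Ordinal (lt_S a)).
have S_sorted : sorted ltn (map val (enum S)).
  rewrite -[enum _](eq_filter (mem_enum _)) -(eq_filter (mem_map val_inj _)) -filter_map.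
  by rewrite (sorted_filter ltn_trans) // unlock val_ord_enum iota_ltn_sorted.
have f_mono (a b : 'I_m) : a < b -> f a < f b.
  move=> lt_ab; rewrite /f !(enum_val_nth (f a)) -!(nth_map (f a) 0) -?cardE ?lt_S //.
  by apply: (sorted_ltn_nth ltn_trans) => //; rewrite inE size_map -cardE lt_S.
exists f; split => // a b; rewrite val_pat.
case: (ltngtP a b) => [lt_ab | lt_ba | /val_inj ->]; last by rewrite ltnn.
  by apply: S_incr (f_mono _ _ lt_ab); apply: enum_valP.
by apply/negbTE; rewrite -leqNgt; apply/ltnW/S_incr; rewrite ?f_mono ?enum_valP.
Qed.

Lemma contains_leq s k k' : k <= k' -> contains s (incr_pat k') -> contains s (incr_pat k).
Proof.
move=> le_kk' /contains_incrP[S S_incr le_k'S].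
by apply/contains_incrP; exists S; last exact: leq_trans le_kk' le_k'S.
Qed.

Lemma incr_on_setU1 s x S :
  incr_on s S -> {in S, forall y, x < y /\ s x < s y} -> incr_on s (x |: S).
Proof.
move=> S_incr x_low y z; rewrite !inE => /predU1P[-> | yS] /predU1P[-> | zS] lt_yz.
- by rewrite ltnn in lt_yz.
- by case: (x_low z zS).
- by case: (x_low y yS) => lt_xy _; move: lt_yz; rewrite ltnNge (ltnW lt_xy).
- exact: S_incr.
Qed.

Lemma ord_minP S : S != set0 -> exists2 x, x \in S & {in S, forall y, x <= y}.
Proof. by case/set0Pn => x0 x0S; case: (arg_minnP (fun y : 'I_n => val y) x0S) => x; exists x. Qed.

Definition upset s x := [set y : 'I_n | (x < y) && (s x < s y)].
Definition up s x := #|upset s x|.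

Lemma incr_on_min_upset s S x :
  incr_on s S -> x \in S -> {in S, forall y, x <= y} -> S :\ x \subset upset s x.
Proof.
move=> S_incr xS x_min; apply/subsetP => y; rewrite !inE => /andP[ne_yx yS].
have lt_xy : x < y by rewrite ltn_neqAle eq_sym ne_yx x_min.
by rewrite lt_xy S_incr.
Qed.

Lemma contains_up s k : 0 < k -> contains s (incr_pat k) -> exists x, k <= (up s x).+1.
Proof.
move=> k_gt0 /contains_incrP[S S_incr le_kS].
have [x xS x_min] : exists2 x, x \in S & {in S, forall y, x <= y}.
  by apply: ord_minP; rewrite -card_gt0 (leq_trans k_gt0).
exists x; rewrite (leq_trans le_kS) // (cardsD1 x) xS ltnS.
exact/subset_leq_card/incr_on_min_upset.
Qed.

Lemma contains_up2 s k : 1 < k -> contains s (incr_pat k) ->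
  exists a c : 'I_n, [/\ a < c, s a < s c & k <= (up s c).+2].
Proof.
move=> k_gt1 /contains_incrP[S S_incr le_kS].
have [a aS a_min] : exists2 a, a \in S & {in S, forall y, a <= y}.
  by apply: ord_minP; rewrite -card_gt0 (leq_trans _ le_kS) // ltnW.
have Sa_incr : incr_on s (S :\ a) by move=> y z /setD1P[_ yS] /setD1P[_ zS]; apply: S_incr.
have [c cSa c_min] : exists2 c, c \in S :\ a & {in S :\ a, forall y, c <= y}.
  by apply: ord_minP; rewrite -card_gt0; move: le_kS; rewrite (cardsD1 a) aS; lia.
have /subsetP/(_ c cSa) := incr_on_min_upset S_incr aS a_min; rewrite inE => /andP[lt_ac lt_sac].
exists a, c; split => //; rewrite (leq_trans le_kS) // (cardsD1 a) aS (cardsD1 c) cSa !ltnS.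
exact/subset_leq_card/incr_on_min_upset.
Qed.

Lemma dominant_contains s x : dominant s -> contains s (incr_pat (up s x).+1).
Proof.
move=> dom; apply/contains_incrP; exists (x |: upset s x); last by rewrite cardsU1 inE ltnn.
apply: incr_on_setU1 => [y z | y]; rewrite !inE => /andP[lt_xy lt_sxy] //.
move=> /andP[lt_xz lt_sxz] lt_yz; rewrite ltnNge; apply/negP => le_szy.
have yz_in : inD s y (s z).
  rewrite inDE permK lt_yz andbT ltn_neqAle le_szy andbT.
  by apply: contraTneq lt_yz => /val_inj/perm_inj ->; rewrite ltnn.
have := dom _ _ x (s z) yz_in (ltnW lt_xy) (leqnn _).
by rewrite inDE => /andP[lt_szx _]; move: lt_sxz; rewrite ltnNge (ltnW lt_szx).
Qed.

End Increasing.

Section Lehmer.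
Variable n : nat.
Implicit Types (s t : 'S_n) (x y z : 'I_n).

Definition lehmer s x := #|[set y : 'I_n | inD s x y]|.

Lemma card_split_value s x v : (forall y, x < y -> s y != v :> nat) ->
  #|[set y : 'I_n | (x < y) && (s y < v)]| + #|[set y : 'I_n | (x < y) && (v < s y)]| = n - x.+1.
Proof.
move=> avoid_v; rewrite -card_or => [|y /andP[_ lt_v]]; last first.
  by rewrite negb_and orbC -leqNgt (ltnW lt_v).
rewrite -(card_geq (ltn_ord x)); apply: eq_card => y; rewrite !inE -andb_orr.
by case: (ltnP x y) => //= lt_xy; rewrite -neq_ltn avoid_v.
Qed.

Lemma lehmer_up s x : lehmer s x + up s x = n - x.+1.
Proof.
rewrite -(@card_split_value s x (s x)) => [|y lt_xy]; last first.
  by apply: contraTneq lt_xy => /val_inj/perm_inj ->; rewrite ltnn.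
congr (_ + _); rewrite -(card_imset _ (@perm_inj _ s)); apply: eq_card => y; rewrite !inE inDE.
apply/andP/imsetP => [[lt_y lt_x] | [z + ->]]; last by rewrite inE permK => /andP[? ?]; split.
by exists ((s^-1)%g y); rewrite ?permKV // inE permKV lt_y lt_x.
Qed.

Lemma lehmer_lt s x : lehmer s x < n - x.
Proof. by have := lehmer_up s x; have := ltn_ord x; lia. Qed.

Lemma inD_prefixE s x y : inD s x y = (y < s x) && [forall z : 'I_n, (z < x) ==> (s z != y)].
Proof.
rewrite inDE; case: (ltnP y (s x)) => //= lt_y.
apply/idP/forallP => [lt_x z | not_above].
  by apply/implyP => lt_zx; apply: contraTneq lt_x => <-; rewrite permK -leqNgt ltnW.
rewrite ltnNge; apply/negP => le; set z := (s^-1)%g y.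
have := not_above z; rewrite permKV eqxx implybF -leqNgt => le'.
have eq_zx : z = x by apply/val_inj/eqP; rewrite eqn_leq le le'.
by move: lt_y; rewrite -eq_zx permKV ltnn.
Qed.

Lemma lehmer_inj s t : (forall x, lehmer s x = lehmer t x) -> s = t.
Proof.
move=> eq_code; suff prefix_eq i x : x < i -> s x = t x.
  by apply/permP => x; apply: (prefix_eq n).
elim: i x => // i IH x lt_xi.
have [/IH // | eq_xi] : x < i \/ x = i :> nat by lia.
have same_prefix z : z < x -> s z = t z by move=> lt_zx; apply: IH; rewrite -eq_xi.
have row_lt s1 s2 : (forall z, z < x -> s1 z = s2 z) -> s1 x < s2 x -> lehmer s1 x < lehmer s2 x.
  move=> pre lt_x; apply: proper_card; apply/properP; split.
    apply/subsetP => y; rewrite !inE !inD_prefixE => /andP[lt_y /forallP pre_y].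
    rewrite (ltn_trans lt_y lt_x); apply/forallP => z; apply/implyP => lt_z.
    by rewrite -pre // (implyP (pre_y z)).
  exists (s1 x); rewrite !inE !inD_prefixE ?ltnn // lt_x /=.
  apply/forallP => z; apply/implyP => lt_z; rewrite -pre //.
  by apply: contraTneq lt_z => /perm_inj ->; rewrite ltnn.
case: (ltngtP (s x) (t x)) => [lt | lt | /val_inj //].
  by have := row_lt s t same_prefix lt; rewrite eq_code ltnn.
by have := row_lt t s (fun z lt_z => esym (same_prefix z lt_z)) lt; rewrite eq_code ltnn.
Qed.

Lemma card_lehmer_codes :
  #|[set f : {ffun 'I_n -> 'I_n} | [forall x, f x < n - x]]| = n`!.
Proof.
rewrite -ffactnn ffact_prod.
have := @card_family _ (fun _ : 'I_n => 'I_n) (fun x : 'I_n => [pred y : 'I_n | y < n - x]).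
rewrite foldrE big_map big_enum /= => card_fam.
transitivity #|family (fun x : 'I_n => [pred y : 'I_n | y < n - x])|.
  by apply: eq_card => f; rewrite inE; apply/forallP/familyP.
rewrite card_fam; apply: eq_bigr => x _.
by rewrite -[RHS](@card_ltn n) ?leq_subr // cardsE.
Qed.

Lemma lehmer_surj (c : 'I_n -> nat) :
  (forall x, c x < n - x) -> exists s, forall x, lehmer s x = c x.
Proof.
move=> c_lt; pose codes := [set f : {ffun 'I_n -> 'I_n} | [forall x, f x < n - x]].
have to_ord (g : 'I_n -> nat) : (forall x, g x < n - x) ->
    {f : {ffun 'I_n -> 'I_n} | forall x, val (f x) = g x}.
  move=> g_lt; exists [ffun x => insubd x (g x)] => x.
  by rewrite ffunE val_insubd (leq_trans (g_lt x) (leq_subr _ _)).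
pose code s := sval (to_ord _ (lehmer_lt s)).
have val_code s x : val (code s x) = lehmer s x := proj2_sig (to_ord _ (lehmer_lt s)) x.
have code_inj : injective code.
  by move=> s t eq_st; apply: lehmer_inj => x; rewrite -!val_code eq_st.
have codesE : code @: setT = codes.
  apply/eqP; rewrite eqEcard card_imset // cardsT card_Sn card_lehmer_codes leqnn andbT.
  apply/subsetP => _ /imsetP[s _ ->]; rewrite inE; apply/forallP => x.
  by rewrite val_code lehmer_lt.
have [f val_f] := to_ord c c_lt.
have : f \in codes by rewrite inE; apply/forallP => x; rewrite val_f.
by rewrite -codesE => /imsetP[s _ eq_f]; exists s => x; rewrite -val_code -eq_f val_f.
Qed.

Lemma lehmer_shape s (L : 'I_n -> nat) :
  (forall x, lehmer s x = L x) -> (forall x y, x <= y -> L y <= L x) ->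
  forall x y, inD s x y = (y < L x).
Proof.
move=> code_L L_mono; suff rows_above i x y : x < i -> inD s x y = (y < L x).
  by move=> x y; apply: rows_above (ltn_ord x).
elim: i x y => // i IH x y lt_xi.
have [/IH // | eq_xi] : x < i \/ x = i :> nat by lia.
have L_le z : L z <= n by rewrite -code_L; apply/ltnW/(leq_trans (lehmer_lt s z))/leq_subr.
have above z : z < x -> L x <= s z.
  move=> lt_zx; have := L_mono _ _ (ltnW lt_zx); case Lz: (L z) => [|l] le_L; first by lia.
  have lt_ln : l < n by have := L_le z; lia.
  have := IH z (Ordinal lt_ln) ltac:(lia); rewrite inDE Lz /= ltnSn => /andP[lt_l _].
  exact: leq_trans le_L lt_l.
have le_Lx : L x <= s x.
  have := @card_ltn n (s x) (ltnW (ltn_ord _)); rewrite -code_L /lehmer => <-.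
  by apply/subset_leq_card/subsetP => y'; rewrite !inE inDE => /andP[].
have sub : [set y : 'I_n | y < L x] \subset [set y : 'I_n | inD s x y].
  apply/subsetP => y'; rewrite !inE inDE => lt_y; rewrite (leq_trans lt_y le_Lx) /=.
  rewrite ltnNge; apply/negP => le; set z := (s^-1)%g y'.
  have [lt_zx | eq_zx] : z < x \/ z = x.
    by case: (ltngtP z x) le => // [? _ | /val_inj]; [left | right].
    by have := above z lt_zx; rewrite permKV leqNgt lt_y.
  by move: le_Lx; rewrite -{2}eq_zx permKV leqNgt lt_y.
have /setP/(_ y) : [set y : 'I_n | y < L x] = [set y : 'I_n | inD s x y].
  apply/eqP; rewrite eqEcard sub -[#|[set y : 'I_n | inD s x y]|]/(lehmer s x) code_L.
  by rewrite card_ltn ?leqnn.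
by rewrite !inE => ->.
Qed.

Lemma shape_perm (L : 'I_n -> nat) :
  (forall x, L x < n - x) -> (forall x y, x <= y -> L y <= L x) ->
  exists s, forall x y, inD s x y = (y < L x).
Proof.
by move=> L_lt L_mono; have [s code_L] := lehmer_surj L_lt; exists s; apply: lehmer_shape.
Qed.

End Lehmer.

Lemma prefix_argmin n (s : 'S_n) (x : 'I_n) :
  exists2 m : 'I_n, m <= x & forall a : 'I_n, a <= x -> s m <= s a.
Proof.
by case: (@arg_minnP _ x (fun a : 'I_n => a <= x) (fun a => s a) (leqnn x)) => m; exists m.
Qed.

Section PrefixMin.
Variable n : nat.
Variables (s : 'S_n) (x m : 'I_n).
Hypotheses (le_mx : m <= x) (m_min : forall a : 'I_n, a <= x -> s m <= s a).

Lemma rk_gt0_argmin j : (0 < rk s x.+1 j) = (s m < j).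
Proof.
apply/rk_gt0P/idP => [[a [+ lt_sa]] | lt_sm]; last by exists m.
by rewrite ltnS => /m_min le_ma; apply: leq_ltn_trans le_ma lt_sa.
Qed.

Lemma card_below_min : #|[set y : 'I_n | (x < y) && (s y < s m)]| = s m.
Proof.
rewrite -(card_imset _ (@perm_inj _ s)) -[RHS](@card_ltn n _ (ltnW (ltn_ord _))).
apply: eq_card => v; rewrite inE; apply/imsetP/idP => [[y + ->] | lt_v].
  by rewrite inE => /andP[].
exists ((s^-1)%g v); rewrite ?permKV // inE permKV lt_v andbT ltnNge.
by apply: contraL lt_v => /m_min; rewrite permKV -leqNgt.
Qed.

Lemma card_above_min : #|[set y : 'I_n | (x < y) && (s m < s y)]| = n - x.+1 - s m.
Proof.
rewrite -(@card_split_value n s x (s m)) ?card_below_min ?addKn // => y lt_xy.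
by apply: contraTneq lt_xy => /val_inj/perm_inj ->; rewrite -leqNgt.
Qed.

End PrefixMin.

Section Schroder.
Variable n : nat.
Variable p : 'S_n.
Implicit Types (a b c d x y m : 'I_n) (i j : nat).

Definition phi_shape i j := below (ess_star p) i j.
Definition phi_row i := #|[set j : 'I_n | phi_shape i j]|.

Lemma ess_starP (e : 'I_n * 'I_n) :
  reflect (exists2 x, x \in ess p & shift_ess p x = (e.1 : nat, e.2 : nat)) (e \in ess_star p).
Proof.
rewrite inE; apply: (iffP existsP) => [[x /andP[x_ess /eqP eq_x]] | [x x_ess eq_x]].
  by exists x.
by exists x; rewrite x_ess eq_x eqxx.
Qed.

Lemma phi_shapeP i j : reflect
  (exists2 x, x \in ess p & (i <= (shift_ess p x).1) && (j <= (shift_ess p x).2))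
  (phi_shape i j).
Proof.
apply: (iffP existsP) => [[e /andP[/ess_starP[x x_ess eq_x] le]] | [x x_ess le]].
  by exists x; rewrite // eq_x.
have /andP[lt1 lt2] : ((shift_ess p x).1 < n) && ((shift_ess p x).2 < n).
  by rewrite /shift_ess; case: ifP => _; rewrite /= ?(leq_ltn_trans (leq_pred _)) ?ltn_ord.
exists (Ordinal lt1, Ordinal lt2); rewrite le andbT.
by apply/ess_starP; exists x; rewrite // -surjective_pairing.
Qed.

Hypothesis p_schroder : schroder p.

Lemma schroder_no_x43 a b c d : a < b -> b < c -> c < d ->
  p a < p d -> p b < p d -> p d < p c -> False.
Proof.
move=> lt_ab lt_bc lt_cd lt_ad lt_bd lt_dc.
have [no1243 no2143] : ~ contains p [:: 1; 2; 4; 3] /\ ~ contains p [:: 2; 1; 4; 3] := p_schroder.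
pose f (u : 'I_4) := nth a [:: a; b; c; d] u.
have f_mono (u v : 'I_4) : u < v -> f u < f v.
  by case: u v => -[|[|[|[|u]]]] hu [[|[|[|[|v]]]] hv]; rewrite /f /=; lia.
case: (ltngtP (p a) (p b)) => [lt_p | lt_p | /val_inj/perm_inj eq_ab].
- apply: no1243; exists f; split => // -[[|[|[|[|u]]]] hu] [[|[|[|[|v]]]] hv];
    move: hu hv => /= hu hv; rewrite /f /=; lia.
- apply: no2143; exists f; split => // -[[|[|[|[|u]]]] hu] [[|[|[|[|v]]]] hv];
    move: hu hv => /= hu hv; rewrite /f /=; lia.
- by rewrite eq_ab ltnn in lt_ab.
Qed.

Lemma schroder_incr_on a b (S : {set 'I_n}) : a < b ->
  {in S, forall y, [/\ b < y, p a < p y & p b < p y]} -> incr_on p S.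
Proof.
move=> lt_ab S_above y z yS zS lt_yz; rewrite ltnNge leq_eqVlt negb_or.
have [lt_by _ _] := S_above y yS; have [_ lt_az lt_bz] := S_above z zS.
apply/andP; split; first by apply: contraTneq lt_yz => /val_inj/perm_inj ->; rewrite ltnn.
by apply/negP => lt_zy; apply: (schroder_no_x43 lt_ab lt_by lt_yz).
Qed.

Lemma schroder_rk_le1 i j : inD p i j -> rk p i j <= 1.
Proof.
move=> ij_in; have /andP[lt_in lt_jn] := inD_ltn ij_in.
pose c := Ordinal lt_in; pose d := (p^-1)%g (Ordinal lt_jn).
have /andP[lt_j lt_cd] : (Ordinal lt_jn < p c) && (c < d) by rewrite -inDE.
have p_d : p d = j :> nat by rewrite permKV.
have no_pair (k k' : 'I_n) : k < k' -> k < c -> p k < j -> k' < c -> p k' < j -> False.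
  move=> lt_kk' _ lt_pk lt_k'c lt_pk'.
  by apply: (schroder_no_x43 lt_kk' lt_k'c lt_cd); rewrite p_d.
rewrite leqNgt; apply/negP => /card_gt1P[k1 [k2 [+ + ne_k]]].
rewrite !inE => /andP[lt_k1 lt_pk1] /andP[lt_k2 lt_pk2].
case: (ltngtP k1 k2) => [lt | lt | /val_inj eq_k]; last by rewrite eq_k eqxx in ne_k.
  exact: no_pair lt lt_k1 lt_pk1 lt_k2 lt_pk2.
exact: no_pair lt lt_k2 lt_pk2 lt_k1 lt_pk1.
Qed.

Lemma phi_shapeE i j : phi_shape i j =
  (inD p i j && (rk p i j == 0)) || (inD p i.+1 j.+1 && (rk p i.+1 j.+1 == 1)).
Proof.
apply/phi_shapeP/idP => [[x x_ess] | ].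
  have x_in : inD p x.1 x.2 by move: x_ess; rewrite essE => /and3P[].
  have rk_le1 := schroder_rk_le1 x_in.
  rewrite /shift_ess rankE; case: eqP => [rk1 | rk_ne1] /andP[/= le_i le_j]; last first.
    have rk0 : rk p x.1 x.2 = 0 by case: (rk p x.1 x.2) rk_le1 rk_ne1 => [|[|]].
    have rk_ij : rk p i j = 0 by apply/eqP; rewrite -leqn0 -rk0 rk_mono.
    by rewrite (inD_of_same_rk x_in le_i le_j) ?rk_ij ?rk0.
  have /rk_gt0P[a [lt_a lt_pa]] : 0 < rk p x.1 x.2 by rewrite rk1.
  have x1_pos : 0 < x.1 := leq_ltn_trans (leq0n a) lt_a.
  have x2_pos : 0 < x.2 := leq_ltn_trans (leq0n _) lt_pa.
  have lt_i : i < x.1 by rewrite -(prednK x1_pos) ltnS.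
  have lt_j : j < x.2 by rewrite -(prednK x2_pos) ltnS.
  have le_rk : rk p i.+1 j.+1 <= 1 by rewrite -rk1 rk_mono.
  case: (eqVneq (rk p i.+1 j.+1) 1) => [rk1' | rk_ne1'].
    by rewrite (inD_of_same_rk x_in lt_i lt_j (etrans rk1' (esym rk1))) orbT.
  have lt_in : i < n := ltn_trans lt_i (ltn_ord _).
  have lt_jn : j < n := ltn_trans lt_j (ltn_ord _).
  by rewrite inD_rk0E //; case: (rk p i.+1 j.+1) le_rk rk_ne1' => [|[|]].
case/orP => /andP[ij_in /eqP rk_ij]; have /andP[lt_in lt_jn] := inD_ltn ij_in.
  have [x x_ess [le_i le_j rk_x]] := ess_above (x := Ordinal lt_in) (y := Ordinal lt_jn) ij_in.
  by exists x; rewrite // /shift_ess rankE rk_x rk_ij /= le_i le_j.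
have [x x_ess [le_i le_j rk_x]] := ess_above (x := Ordinal lt_in) (y := Ordinal lt_jn) ij_in.
rewrite /= in le_i le_j; exists x => //; rewrite /shift_ess rankE rk_x rk_ij /=.
by rewrite -[i <= _]ltnS -[j <= _]ltnS (ltn_predK le_i) (ltn_predK le_j) le_i le_j.
Qed.

Lemma phi_shape_corner (e : 'I_n * 'I_n) :
  e \in ess_star p -> ~~ phi_shape e.1.+1 e.2 && ~~ phi_shape e.1 e.2.+1.
Proof.
case/ess_starP => x x_ess; have := x_ess; rewrite essE => /and3P[x_in not_down not_right].
rewrite /shift_ess rankE !phi_shapeE; case: eqP => [rk1 | rk_ne1] [<- <-]; last first.
  rewrite (negbTE not_down) (negbTE not_right).
  rewrite (negbTE (inD_right_stop x_in not_right (leqW (leqnSn _)))).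
  by rewrite (negbTE (inD_down_stop x_in not_down (leqW (leqnSn _)))).
have /rk_gt0P[a [lt_a lt_pa]] : 0 < rk p x.1 x.2 by rewrite rk1.
have x1_pos : 0 < x.1 := leq_ltn_trans (leq0n a) lt_a.
have x2_pos : 0 < x.2 := leq_ltn_trans (leq0n _) lt_pa.
have rk_pos i j : x.1 <= i -> x.2 <= j -> (rk p i j == 0) = false.
  by move=> le_i le_j; apply/negbTE; rewrite -lt0n -rk1 rk_mono.
rewrite !prednK // (negbTE not_down) (negbTE not_right) !andFb !orbF.
have lt_x1 : x.1.-1 < n := leq_ltn_trans (leq_pred _) (ltn_ord _).
have lt_x2 : x.2.-1 < n := leq_ltn_trans (leq_pred _) (ltn_ord _).
by rewrite !inD_rk0E ?ltn_ord // !prednK // !rk_pos ?leqnSn.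
Qed.

Lemma phi_shape_argminE x m j : m <= x -> (forall a, a <= x -> p m <= p a) ->
  phi_shape x j = (j < p m) || inD p x.+1 j.+1.
Proof.
move=> le_mx m_min; rewrite phi_shapeE.
have [lt_jn | le_nj] := ltnP j n; last first.
  have out k l : n <= l -> inD p k l = false.
    by move=> le_nl; apply: contraTF le_nl => /inD_ltn/andP[_]; rewrite -ltnNge.
  rewrite (out x j le_nj) (out x.+1 j.+1 (leqW le_nj)) orbF; apply/esym/negbTE.
  by rewrite -leqNgt (leq_trans (ltnW (ltn_ord _)) le_nj).
rewrite inD_rk0E // eqn0Ngt (rk_gt0_argmin le_mx m_min) ltnS -ltnNge.
case: (ltnP j (p m)) => //= le_mj; case xj_in: (inD p x.+1 j.+1) => //=.
by rewrite eqn_leq schroder_rk_le1 // (rk_gt0_argmin le_mx m_min) ltnS le_mj.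
Qed.

Lemma phi_row_argminE x m : m <= x -> (forall a, a <= x -> p m <= p a) ->
  phi_row x = p m + #|[set j : 'I_n | (p m < j) && inD p x.+1 j]|.
Proof.
move=> le_mx m_min; rewrite /phi_row.
rewrite (eq_card (B := [set j : 'I_n | (j < p m) || (p m < j.+1) && inD p x.+1 j.+1])); last first.
  move=> j; rewrite !inE (phi_shape_argminE _ le_mx m_min).
  by case: ltnP => //= le; rewrite ltnS le.
rewrite (@card_or _ (fun j : 'I_n => j < p m) (fun j : 'I_n => (p m < j.+1) && inD p x.+1 j.+1)).
  rewrite (card_ltn (ltnW (ltn_ord _))); congr (_ + _).
  apply: (@card_shift n (fun j => (p m < j) && inD p x.+1 j)) => //.
  by apply/negP => /andP[_ /inD_ltn/andP[_]]; rewrite ltnn.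
by move=> j lt_j; rewrite ltnS leqNgt lt_j.
Qed.

Lemma phi_row_split x m c : c = x.+1 :> nat -> m <= x ->
  (forall a, a <= x -> p m <= p a) ->
  (p m < p c /\ phi_row x = lehmer p c) \/ (p c < p m /\ phi_row x = p m).
Proof.
move=> c_x le_mx m_min; rewrite (phi_row_argminE le_mx m_min) -c_x.
have [lt_mc | lt_cm | /val_inj/perm_inj eq_mc] := ltngtP (p m) (p c); last first.
- by move: le_mx; rewrite eq_mc c_x ltnn.
- right; split => //; rewrite (_ : [set j | _] = set0) ?cards0 ?addn0 //.
  apply/setP => j; rewrite !inE inDE; apply/negbTE/negP => /and3P[lt_mj lt_jc _].
  by move: (ltn_trans lt_cm lt_mj); rewrite ltnNge ltnW.
left; split => //; rewrite /lehmer.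
rewrite [in RHS](eq_card (B := [set j : 'I_n | (j < p m) || (p m < j) && inD p c j])) => [|j].
  rewrite (@card_or _ (fun j : 'I_n => j < p m) (fun j : 'I_n => (p m < j) && inD p c j)).
    by rewrite (card_ltn (ltnW (ltn_ord _))).
  by move=> j lt_j; rewrite ltnNge ltnW.
have le_c a : a < c -> a <= x by rewrite c_x ltnS.
rewrite !inE; have [lt_jm | // | /val_inj eq_jm] := ltngtP j (p m); last first.
  by rewrite inDE eq_jm permK [c < m]ltnNge (leq_trans le_mx) ?c_x ?andbF.
(* the dot of column j lies below row c: the rows up to c carry values at least p m > j *)
rewrite inDE (ltn_trans lt_jm lt_mc) /= ltnNge leq_eqVlt; apply/negP => /orP[/eqP eq_c | lt_c].
  by move: lt_jm; rewrite -(permKV p j) (val_inj eq_c) ltnNge ltnW.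
by move: (m_min _ (le_c _ lt_c)); rewrite permKV leqNgt lt_jm.
Qed.

Lemma phi_row_pred a c : a < c -> p a < p c -> phi_row c.-1 = lehmer p c.
Proof.
move=> lt_ac lt_pac; have lt_x : c.-1 < n := leq_ltn_trans (leq_pred c) (ltn_ord c).
have [m le_mx m_min] := prefix_argmin p (Ordinal lt_x).
have c_x : c = (Ordinal lt_x).+1 :> nat by rewrite /= prednK // (leq_ltn_trans _ lt_ac).
have le_pma : p m <= p a by apply: m_min; rewrite /= -ltnS -c_x.
case: (phi_row_split c_x le_mx m_min) => -[lt_pm ->] //.
by move: (leq_ltn_trans le_pma lt_pac); rewrite ltnNge ltnW.
Qed.

Lemma phi_row_lt x : phi_row x < n - x.
Proof.
have [m le_mx m_min] := prefix_argmin p x.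
have le_pm : p m <= n - x.+1.
  rewrite -(card_below_min m_min) -(card_geq (ltn_ord x)).
  by apply/subset_leq_card/subsetP => y; rewrite !inE => /andP[].
have [lt_x1 | le_nx1] := ltnP x.+1 n.
  case: (phi_row_split (c := Ordinal lt_x1) erefl le_mx m_min) => -[_ ->].
    by have := lehmer_lt p (Ordinal lt_x1); rewrite /=; lia.
  by have := ltn_ord x; lia.
rewrite (phi_row_argminE le_mx m_min) (_ : [set j | _] = set0) ?cards0 ?addn0.
  by have := ltn_ord x; lia.
apply/setP => j; rewrite !inE; apply/negbTE/negP => /andP[_ /inD_ltn/andP[]].
by rewrite ltnNge le_nx1.
Qed.

Lemma phi_shape_row_len x y : phi_shape x y = (y < phi_row x).
Proof.
have down (j k : 'I_n) :
    k <= j -> j \in [set j : 'I_n | phi_shape x j] -> k \in [set j : 'I_n | phi_shape x j].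
  by move=> le_kj; rewrite !inE => /below_mono; apply.
by have := downset_mem down y; rewrite inE.
Qed.

Lemma phi_shape_perm : exists s : 'S_n, forall i j, inD s i j = phi_shape i j.
Proof.
have row_mono x y : x <= y -> phi_row y <= phi_row x.
  by move=> le_xy; apply/subset_leq_card/subsetP => j; rewrite !inE => /below_mono; apply.
have [s sE] := shape_perm phi_row_lt row_mono.
exists s => i j; have [/andP[lt_i lt_j] | out] := boolP ((i < n) && (j < n)).
  by rewrite -[i]/(Ordinal lt_i : nat) -[j]/(Ordinal lt_j : nat) sE phi_shape_row_len.
rewrite /phi_shape (negbTE (contra (@inD_ltn _ s i j) out)).
by rewrite (negbTE (contra (@below_ltn _ _ i j) out)).
Qed.

Lemma phi_specP s : (forall i j, inD s i j = phi_shape i j) -> phi_spec p s.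
Proof.
move=> sE; have s_dom : dominant s by move=> i j i' j'; rewrite !sE; apply: below_mono.
rewrite /phi_spec {1}(ess_below sE phi_shape_corner) eqxx /=.
apply/forallP => e; apply/implyP; rewrite essE => /and3P[e_in _ _].
by rewrite rankE dominant_rk0.
Qed.

Lemma phi_diagram i j : inD (phi p) i j = phi_shape i j.
Proof.
have /andP[/eqP ess_phi /forallP rk_phi] : phi_spec p (phi p).
  rewrite /phi; case: pickP => [s //| none]; have [s sE] := phi_shape_perm.
  by move: (none s); rewrite /= (phi_specP sE).
rewrite rank0_diagram ?ess_phi // => e e_ess; apply/eqP.
by apply: (implyP (rk_phi e)); rewrite ess_phi.
Qed.

Lemma phi_dominant : dominant (phi p).
Proof. by move=> i j i' j'; rewrite !phi_diagram; apply: below_mono. Qed.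

Lemma phi_up_row x : (up (phi p) x).+1 = n - x - phi_row x.
Proof.
have := lehmer_up (phi p) x.
rewrite /lehmer (eq_card (B := [set j : 'I_n | phi_shape x j])) => [|j]; last first.
  by rewrite !inE phi_diagram.
by rewrite -/(phi_row x); have := phi_row_lt x; lia.
Qed.

Lemma phi_contains k : 0 < k ->
  contains (phi p) (incr_pat k) <-> exists x : 'I_n, k <= n - x - phi_row x.
Proof.
move=> k_gt0; split => [/(contains_up k_gt0)[x le_k] | [x le_k]].
  by exists x; rewrite -phi_up_row.
by apply: contains_leq (dominant_contains x phi_dominant); rewrite phi_up_row.
Qed.

Lemma schroder_contains_12 a c : a < c -> p a < p c -> contains p (incr_pat (up p c).+2).
Proof.
move=> lt_ac lt_pac; apply/contains_incrP; exists (a |: (c |: upset p c)); last first.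
  by rewrite !cardsU1 !inE ltnn -val_eqE (ltn_eqF lt_ac) [c < a]ltnNge (ltnW lt_ac).
apply: incr_on_setU1; last first.
  move=> y; rewrite !inE => /predU1P[-> // | /andP[lt_cy lt_pcy]].
  by split; [apply: ltn_trans lt_cy | apply: ltn_trans lt_pcy].
apply: incr_on_setU1; last by move=> y; rewrite inE => /andP.
apply: (schroder_incr_on lt_ac) => y; rewrite inE => /andP[lt_cy lt_pcy].
by split => //; apply: ltn_trans lt_pcy.
Qed.

Lemma schroder_contains_min x m c : c = x.+1 :> nat -> m <= x ->
  (forall a, a <= x -> p m <= p a) -> p c < p m -> contains p (incr_pat (n - x.+1 - p m).+1).
Proof.
move=> c_x le_mx m_min lt_pcm; have lt_mc : m < c by rewrite c_x ltnS.
apply/contains_incrP; exists (m |: [set y : 'I_n | (x < y) && (p m < p y)]); last first.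
  by rewrite cardsU1 inE [x < m]ltnNge le_mx /= (card_above_min le_mx m_min).
apply: incr_on_setU1; last first.
  by move=> y; rewrite inE => /andP[lt_xy ?]; split => //; apply: leq_ltn_trans le_mx lt_xy.
apply: (schroder_incr_on lt_mc) => y; rewrite inE => /andP[lt_xy lt_pmy].
have ne_yc : y != c by apply: contraTneq lt_pmy => ->; rewrite ltnNge ltnW.
by split => //; [rewrite ltn_neqAle eq_sym ne_yc c_x | apply: ltn_trans lt_pmy].
Qed.

Lemma schroder_contains k : 0 < k ->
  contains p (incr_pat k) <-> exists x : 'I_n, k <= n - x - phi_row x.
Proof.
move=> k_gt0; have [k_gt1 | k_le1] := ltnP 1 k; last first.
  split=> [/(contains_up k_gt0)[x _] | [x _]]; first by exists x; have := phi_row_lt x; lia.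
  apply: contains_leq k_le1 _; apply/contains_incrP; exists [set x]; last by rewrite cards1.
  by move=> y z /set1P-> /set1P->; rewrite ltnn.
split => [/(contains_up2 k_gt1)[a [c [lt_ac lt_pac le_k]]] | [x le_k]].
  have lt_c1 : c.-1 < n := leq_ltn_trans (leq_pred c) (ltn_ord c).
  exists (Ordinal lt_c1); rewrite /= (phi_row_pred lt_ac lt_pac) -subn1.
  by have := lehmer_up p c; have := ltn_ord c; have := leq_ltn_trans (leq0n a) lt_ac; lia.
have lt_x1 : x.+1 < n by have := phi_row_lt x; lia.
have [m le_mx m_min] := prefix_argmin p x.
have lt_mc : m < Ordinal lt_x1 by rewrite /= ltnS.
case: (phi_row_split (c := Ordinal lt_x1) erefl le_mx m_min) => -[lt_pm row_x].
  apply: contains_leq (schroder_contains_12 lt_mc lt_pm).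
  by have := lehmer_up p (Ordinal lt_x1); rewrite /= -row_x; lia.
by apply: contains_leq (schroder_contains_min (c := Ordinal lt_x1) erefl le_mx m_min lt_pm); lia.
Qed.

End Schroder.

Theorem theorem3p1 (n : nat) (p : 'S_n) :
  schroder p ->
  forall k : nat, 1 <= k ->
    (avoids p (incr_pat k) <-> avoids (phi p) (incr_pat k)).
Proof.
move=> p_schroder k k_gt0.
by rewrite /avoids (schroder_contains p_schroder k_gt0) (phi_contains p_schroder k_gt0).
Qed.
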